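(* Let $(X,d,A)$ be a metric pair and $p\in[1,\infty]$. If $(X,d)$ is compact, then $(D^n(X,A),W_p)$ is compact for every $n\in\mathbb{N}$.
   Context: A metric on $X$ is a map $d:X\times X\to[0,\infty]$ with $d(x,x)=0$, symmetry and the triangle inequality (infinite distances allowed, $d(x,y)=0$ need not imply $x=y$); a metric pair $(X,d,A)$ is such a space with a closed subset $A$. $D^n(X,A)$ is the set of formal sums $\sum_{i=1}^m x_i$ of points of $X\setminus A$ with $0\le m\le n$ (repetitions allowed). A matching of $\hat\alpha=\sum_{i\in I}x_i$, $\hat\beta=\sum_{j\in J}y_j$ is a formal sum $\sum_{k\in K}(x_k,y_{\varphi(k)})+\sum_{i\in I\setminus K}(x_i,z_i)+\sum_{j\in J\setminus\varphi(K)}(w_j,y_j)$ with $K\subset I$, $\varphi$ injective, $z_i,w_j\in A$; its $p$-cost is the $\ell^p$ norm (sup norm if $p=\infty$) of the distances of paired points; $W_p$ is the infimum of $p$-costs over matchings. *)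

From HB Require Import structures.
From mathcomp Require Import all_boot all_order all_algebra.
From mathcomp Require Import all_classical all_reals ereal exp.
Set Implicit Arguments. Unset Strict Implicit. Unset Printing Implicit Defensive.
Import Order.TTheory GRing.Theory Num.Theory.
Local Open Scope classical_set_scope.
Local Open Scope ring_scope.

(** Extended (pseudo)metric: values in [0, +oo], d x x = 0, symmetric,
    triangle inequality; d x y = 0 need not imply x = y. *)
Definition is_metric (R : realType) (T : Type) (d : T -> T -> \bar R) : Prop :=
  [/\ (forall x y, (0 <= d x y)%E),
      (forall x, d x x = 0%E),
      (forall x y, d x y = d y x) &
      (forall x y z, (d x z <= d x y + d y z)%E)].

Definition open_in (R : realType) (T : Type) (d : T -> T -> \bar R)
    (S U : set T) : Prop :=
  U `<=` S /\
  forall x, U x -> exists r : R, 0 < r /\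
    forall y, S y -> (d x y < r%:E)%E -> U y.

Definition closed_set (R : realType) (T : Type) (d : T -> T -> \bar R)
    (A : set T) : Prop :=
  open_in d setT (~` A).

Definition compact_in (R : realType) (T : Type) (d : T -> T -> \bar R)
    (S : set T) : Prop :=
  forall (I : Type) (U : I -> set T),
    (forall i, open_in d S (U i)) ->
    S `<=` \bigcup_i U i ->
    exists (m : nat) (F : 'I_m -> I), S `<=` \bigcup_k U (F k).

(** D^n(X, A): formal sums of at most n points of X \ A, represented as
    finite lists (the order is irrelevant for W_p). *)
Definition Dn (T : Type) (A : set T) (n : nat) : set (seq T) :=
  [set s | (size s <= n)%N /\ forall i : 'I_(size s), ~ A (tnth (in_tuple s) i)].

Definition lp_norm (R : realType) (p : \bar R) (l : seq (\bar R)) : \bar R :=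
  match p with
  | r%:E => ((\sum_(e <- l) (e `^ r)) `^ (r^-1))%E
  | _ => (\big[Order.max/0%E]_(e <- l) e)%E
  end.

(** A matching of xs = sum_i x_i and ys = sum_j y_j:
    phi i = Some j means x_i is paired with y_j (phi injective on its
    support, i.e. K = {i | phi i <> None}); otherwise x_i is paired with
    z i in A; every y_j not in the image of phi is paired with w j in A.
    matching_costs lists the distances of paired points. *)
Definition is_matching (T : Type) (A : set T) (xs ys : seq T)
    (phi : 'I_(size xs) -> option 'I_(size ys))
    (z : 'I_(size xs) -> T) (w : 'I_(size ys) -> T) : Prop :=
  [/\ (forall i i' j, phi i = Some j -> phi i' = Some j -> i = i'),
      (forall i, phi i = None -> A (z i)) &
      (forall j, (forall i, phi i <> Some j) -> A (w j))].

Definition matching_costs (R : realType) (T : Type) (d : T -> T -> \bar R)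
    (xs ys : seq T)
    (phi : 'I_(size xs) -> option 'I_(size ys))
    (z : 'I_(size xs) -> T) (w : 'I_(size ys) -> T) : seq (\bar R) :=
  [seq match phi i with
       | Some j => d (tnth (in_tuple xs) i) (tnth (in_tuple ys) j)
       | None => d (tnth (in_tuple xs) i) (z i)
       end | i <- enum 'I_(size xs)]
  ++ [seq d (w j) (tnth (in_tuple ys) j)
       | j <- enum 'I_(size ys) & [forall i, phi i != Some j]].

Definition Wp (R : realType) (T : Type) (d : T -> T -> \bar R) (A : set T)
    (p : \bar R) (xs ys : seq T) : \bar R :=
  ereal_inf [set c | exists phi z w,
     @is_matching T A xs ys phi z w /\
     c = lp_norm p (matching_costs d phi z w)].

(* D^n(X, A) is the finite union, over k <= n, of the images of X^k under the
   map sending (x_1, ..., x_k) to the formal sum of those x_i lying outside A.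
   X^k with the sup metric is compact by the tube lemma, and this map is
   continuous into W_p: pairing x_i with y_i when both lie outside A, and every
   other point outside A with its partner (which then lies in A), is a matching
   with at most 2k costs, each bounded by the sup distance of the two k-tuples.
   A finite union of continuous images of compact spaces is compact. *)

From HB Require Import structures.
From mathcomp Require Import all_boot all_order all_algebra.
From mathcomp Require Import all_classical all_reals ereal exp.
Local Open Scope classical_set_scope.
Local Open Scope ring_scope.
Set Implicit Arguments. Unset Strict Implicit. Unset Printing Implicit Defensive.
Import Order.TTheory GRing.Theory Num.Theory.

Section CompactIn.
Variable R : realType.

Definition interior_in (T : Type) (d : T -> T -> \bar R) (S P : set T) : set T :=
  [set x | S x /\ exists2 t : R, 0 < t & forall y, S y -> (d x y < t%:E)%E -> P y].

Definition continuous_wrt (T1 T2 : Type) (d1 : T1 -> T1 -> \bar R)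
    (d2 : T2 -> T2 -> \bar R) (f : T1 -> T2) : Prop :=
  forall x (e : R), 0 < e -> exists2 del : R, 0 < del &
    forall y, (d1 x y < del%:E)%E -> (d2 (f x) (f y) < e%:E)%E.

Lemma open_in_interior (T : Type) (d : T -> T -> \bar R) (S P : set T) :
  is_metric d -> open_in d S (interior_in d S P).
Proof.
case=> _ _ _ d_tri; split=> [x [] //|x [Sx [t t_gt0 xP]]].
have t2_gt0 : 0 < t / 2 by rewrite divr_gt0.
exists (t / 2); split=> // y Sy xy; split=> //; exists (t / 2) => // z Sz yz.
apply: xP => //; apply: le_lt_trans (d_tri x y z) _.
by rewrite [t]splitr EFinD lteD.
Qed.

Lemma finite_subcover_finType (T I : Type) (S : set T) (U : I -> set T)
    (J : finType) (F : J -> I) :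
  S `<=` \bigcup_j U (F j) -> exists (m : nat) (G : 'I_m -> I), S `<=` \bigcup_k U (G k).
Proof.
move=> SFU; exists #|{: J}|, (F \o enum_val) => x /SFU [j _ Ujx].
by exists (enum_rank j) => //=; rewrite enum_rankK.
Qed.

Lemma open_in_restrict (T : Type) (d : T -> T -> \bar R) (S S' U : set T) :
  S' `<=` S -> open_in d S U -> open_in d S' (U `&` S').
Proof.
move=> S'S [_ Uopen]; split=> [x [] //|x [Ux S'x]].
have [r [r_gt0 rU]] := Uopen x Ux.
by exists r; split=> // y S'y xy; split=> //; apply: rU => //; apply: S'S.
Qed.

Lemma compact_in_image (T1 T2 : Type) (d1 : T1 -> T1 -> \bar R)
    (d2 : T2 -> T2 -> \bar R) (f : T1 -> T2) :
  compact_in d1 setT -> continuous_wrt d1 d2 f -> compact_in d2 (range f).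
Proof.
move=> T1c fc I U Uopen Ucov.
have [|x _|m [F FU]] := T1c I (fun i => f @^-1` U i).
- move=> i; split=> // x Ufx; have [_ /(_ _ Ufx) [r [r_gt0 rU]]] := Uopen i.
  have [del del_gt0 fdel] := fc x r r_gt0.
  by exists del; split=> // y _ /fdel; apply: rU; exists y.
- by have [i _ Ui] := Ucov (f x) (imageT f x); exists i.
- by exists m, F => _ [x _ <-]; apply: FU.
Qed.

Lemma compact_in_bigcup (T : Type) (d : T -> T -> \bar R) (J : finType)
    (S : J -> set T) :
  (forall j, compact_in d (S j)) -> compact_in d (\bigcup_j S j).
Proof.
move=> Sc I U Uopen Ucov.
have subcover j : exists c : {m : nat & 'I_m -> I},
    S j `<=` \bigcup_k U (projT2 c k).
  have [|x Sjx|m [F FU]] := Sc j I (fun i => U i `&` S j).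
  - by move=> i; apply: open_in_restrict (Uopen i) => x Sjx; exists j.
  - have [i _ Uix] : (\bigcup_i U i) x by apply: Ucov; exists j.
    by exists i.
  - by exists (existT _ m F) => x /FU [k _ []]; exists k.
have [c cU] := choice subcover.
apply: (@finite_subcover_finType _ _ _ _ {j : J & 'I_(projT1 (c j))}
  (fun jk => projT2 (c (tag jk)) (tagged jk))).
by move=> x [j _ /cU [k _ Ukx]]; exists (Tagged (fun j => 'I_(projT1 (c j))) k).
Qed.

End CompactIn.

Definition max_dist (R : realType) (T1 T2 : Type) (d1 : T1 -> T1 -> \bar R)
    (d2 : T2 -> T2 -> \bar R) (a b : T1 * T2) : \bar R :=
  maxe (d1 a.1 b.1) (d2 a.2 b.2).

Section Product.
Variables (R : realType) (T1 T2 : Type).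
Variables (d1 : T1 -> T1 -> \bar R) (d2 : T2 -> T2 -> \bar R).
Hypotheses (d1_metric : is_metric d1) (d2_metric : is_metric d2).
Hypotheses (T1c : compact_in d1 setT) (T2c : compact_in d2 setT).

Lemma tube (I : Type) (U : I -> set (T1 * T2)) :
  (forall i, open_in (max_dist d1 d2) setT (U i)) -> setT `<=` \bigcup_i U i ->
  forall x, exists (m : nat) (F : 'I_m -> I), exists2 rho : R, 0 < rho &
    forall x' y, (d1 x x' < rho%:E)%E -> exists k, U (F k) (x', y).
Proof.
move=> Uopen Ucov x.
have [_ d2xx _ d2_tri] := d2_metric.
pose V (j : I * {posnum R}) := [set y | forall x' y', (d1 x x' < j.2%:num%:E)%E ->
  (d2 y y' < j.2%:num%:E)%E -> U j.1 (x', y')].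
have [|y _|m [F FV]] := T2c (U := fun j : I * {posnum R} => interior_in d2 setT (V j)).
- by move=> j; apply: open_in_interior.
- have [i _ Uixy] := Ucov (x, y) Logic.I.
  have [_ /(_ _ Uixy) [r [r_gt0 rU]]] := Uopen i.
  have r2_gt0 : 0 < r / 2 by rewrite divr_gt0.
  exists (i, PosNum r2_gt0) => //; split=> //.
  exists (r / 2) => // y'' _ yy'' x' y' xx' y''y'.
  apply: rU => //=; rewrite /max_dist /= gt_max; apply/andP; split.
    by apply: lt_trans xx' _; rewrite lte_fin ltr_pdivrMr // ltr_pMr // ltr1n.
  by apply: le_lt_trans (d2_tri _ y'' _) _; rewrite [r]splitr EFinD lteD.
- exists m, (fst \o F), (\big[Order.min/1]_k (F k).2%:num).
    by apply/bigmin_gtP; split.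
  move=> x' y xx'; have [k _ [_ [t t_gt0 Vy]]] := FV y Logic.I.
  exists k; apply: (Vy y) => //.
  + by rewrite d2xx lte_fin.
  + by apply: lt_le_trans xx' _; rewrite lee_fin bigmin_le.
  + by rewrite d2xx lte_fin.
Qed.

Lemma compact_in_prod : compact_in (max_dist d1 d2) setT.
Proof.
move=> I U Uopen Ucov; have [_ d1xx _ _] := d1_metric.
pose G (c : {m : nat & 'I_m -> I}) :=
  interior_in d1 setT [set x | forall y, exists k, U (projT2 c k) (x, y)].
have [|x _|M [C CG]] := T1c (U := G).
- by move=> c; apply: open_in_interior.
- have [m [F [rho rho_gt0 FU]]] := tube Uopen Ucov x.
  by exists (existT _ m F) => //; split=> //; exists rho => // x' _ /FU.
- apply: (@finite_subcover_finType _ _ _ _ {l : 'I_M & 'I_(projT1 (C l))}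
    (fun lk => projT2 (C (tag lk)) (tagged lk))).
  move=> [x y] _; have [l _ [_ [t t_gt0 Gx]]] := CG x Logic.I.
  have [k Ukxy] := Gx x Logic.I ltac:(by rewrite d1xx lte_fin) y.
  by exists (Tagged (fun l => 'I_(projT1 (C l))) k).
Qed.

End Product.

Section SupDist.
Variables (R : realType) (X : Type) (d : X -> X -> \bar R).
Hypothesis d_metric : is_metric d.

Fixpoint sup_dist (s t : seq X) : \bar R :=
  if (s, t) is (x :: s', y :: t') then maxe (d x y) (sup_dist s' t') else 0%E.

Definition tuple_dist k (s t : k.-tuple X) : \bar R := sup_dist s t.

Lemma sup_dist_tri s t u : size s = size t -> size t = size u ->
  (sup_dist s u <= sup_dist s t + sup_dist t u)%E.
Proof.
have [d_ge0 _ _ d_tri] := d_metric.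
elim: s t u => [|x s IH] [|y t] [|z u] //=; first by rewrite adde0.
move=> [st] [tu].
rewrite ge_max; apply/andP; split.
  by apply: le_trans (d_tri x y z) _; apply: leeD; rewrite le_max lexx.
by apply: le_trans (IH _ _ st tu) _; apply: leeD; rewrite le_max lexx orbT.
Qed.

Lemma is_metric_tuple_dist k : is_metric (@tuple_dist k).
Proof.
have [d_ge0 dxx dC _] := d_metric; rewrite /tuple_dist.
split=> [[s _] [t _]|[s _]|[s _] [t _]|s t u] /=.
- by elim: s t => [|x s IH] [|y t] //=; rewrite le_max d_ge0.
- by elim: s => //= x s ->; rewrite dxx maxxx.
- by elim: s t => [|x s IH] [|y t] //=; rewrite dC IH.
- by apply: sup_dist_tri; rewrite !size_tuple.
Qed.

Lemma sup_dist_nth x0 s t i : (i < size s)%N -> (i < size t)%N ->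
  (d (nth x0 s i) (nth x0 t i) <= sup_dist s t)%E.
Proof.
elim: s t i => [|x s IH] [|y t] [|i] //= si ti; rewrite le_max ?lexx //.
by rewrite IH ?orbT.
Qed.

Lemma tuple_dist_tnth k (s t : k.-tuple X) i :
  (d (tnth s i) (tnth t i) <= tuple_dist s t)%E.
Proof. by have x0 := tnth s i; rewrite !(tnth_nth x0) sup_dist_nth ?size_tuple. Qed.

Lemma compact_in_tuples k : compact_in d setT -> compact_in (@tuple_dist k) setT.
Proof.
move=> Xc; elim: k => [|k IH].
  move=> I U _ Ucov; have [i _ Ui] := Ucov [tuple] Logic.I.
  by exists 1%N, (fun=> i) => t _; exists ord0; rewrite // [t]tuple0.
have -> : [set: k.+1.-tuple X] = range (fun xt : X * k.-tuple X => [tuple of xt.1 :: xt.2]).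
  apply/seteqP; split=> // t _.
  by exists (thead t, behead_tuple t); rewrite // [RHS]tuple_eta.
apply: compact_in_image (compact_in_prod d_metric (is_metric_tuple_dist k) Xc IH) _.
(* Consing is an isometry from [max_dist d tuple_dist], by definition of [sup_dist]. *)
by move=> xt e e_gt0; exists e.
Qed.

End SupDist.

Section LpNorm.
Variable R : realType.

Lemma powR_le_id (x r : R) : 0 <= x <= 1 -> 1 <= r -> x `^ r <= x.
Proof.
case/andP=> x_ge0 x_le1 r_ge1; have [->|x_neq0] := eqVneq x 0.
  by rewrite powR0 // gt_eqF // (lt_le_trans ltr01 r_ge1).
by apply: ge1r_powR => //; rewrite lt_neqAle eq_sym x_neq0 x_ge0.
Qed.

Lemma sum_poweR_le (r del : R) (l : seq (\bar R)) : 1 <= r -> del <= 1 ->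
  (forall e, e \in l -> 0 <= e < del%:E)%E ->
  (\sum_(e <- l) e `^ r <= ((size l)%:R * del)%:E)%E.
Proof.
move=> r_ge1 del_le1; elim: l => [|e l IH] el; first by rewrite big_nil mul0r.
rewrite big_cons /= -add1n natrD mulrDl mul1r EFinD.
apply: leeD; last by apply: IH => e' e'l; apply: el; rewrite in_cons e'l orbT.
have /andP[] := el e (mem_head e l).
case: e {el} => [x||] //; rewrite !lee_fin lte_fin.
move=> x_ge0 x_lt; apply: le_trans (ltW x_lt).
by rewrite powR_le_id // x_ge0 (le_trans (ltW x_lt)).
Qed.

Lemma lp_norm_small (p : \bar R) (N : nat) (eps : R) : (1%:E <= p)%E -> 0 < eps ->
  exists2 del : R, 0 < del & forall l : seq (\bar R), (size l <= N)%N ->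
    (forall e, e \in l -> 0 <= e < del%:E)%E -> (lp_norm p l < eps%:E)%E.
Proof.
move=> p_ge1 eps_gt0; case: p p_ge1 => [r||] //= r_ge1.
- rewrite lee_fin in r_ge1; have r_gt0 : 0 < r := lt_le_trans ltr01 r_ge1.
  have epsr_gt0 : 0 < eps `^ r by rewrite powR_gt0.
  pose del := Num.min 1 (eps `^ r / N.+1%:R).
  have del_gt0 : 0 < del by rewrite lt_min ltr01 divr_gt0.
  have Ndel_lt : N%:R * del < eps `^ r.
    have Ndel_le : N%:R * del <= N%:R * (eps `^ r / N.+1%:R).
      by rewrite ler_wpM2l // ge_min lexx orbT.
    by apply: le_lt_trans Ndel_le _; rewrite mulrCA gtr_pMr // ltr_pdivrMr // mul1r ltr_nat.
  have Ndel_ge0 : 0 <= N%:R * del := mulr_ge0 (ler0n _ _) (ltW del_gt0).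
  exists del => // l lN el.
  have sum_le : (\sum_(e <- l) e `^ r <= (N%:R * del)%:E)%E.
    have del_le1 : del <= 1 by rewrite ge_min lexx.
    apply: le_trans (sum_poweR_le r_ge1 del_le1 el) _.
    by rewrite lee_fin ler_pM2r // ler_nat.
  have sum_ge0 : (0 <= \sum_(e <- l) e `^ r)%E by apply: sume_ge0 => e _; apply: poweR_ge0.
  apply: (le_lt_trans (gt0_ler_poweR _ _ _ sum_le)).
  - by rewrite invr_ge0 ltW.
  - by rewrite in_itv /= sum_ge0 leey.
  - by rewrite in_itv /= leey andbT lee_fin.
  rewrite poweR_EFin lte_fin.
  have -> : eps = (eps `^ r) `^ r^-1 by rewrite -powRrM mulfV ?gt_eqF // powRr1 ?ltW.
  by rewrite gt0_ltr_powR ?invr_gt0 // nnegrE ?powR_ge0.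
- exists eps => // l _ el; rewrite big_seq.
  apply: (big_ind (fun x => x < eps%:E)%E) => [|x y|e /el /andP[]//].
    by rewrite lte_fin.
  by rewrite gt_max => -> ->.
Qed.

End LpNorm.

Lemma tnth_in_tuple_map (T1 T2 : Type) (f : T1 -> T2) (s : seq T1)
    (i : 'I_(size (map f s))) :
  tnth (in_tuple (map f s)) i = f (tnth (in_tuple s) (cast_ord (size_map f s) i)).
Proof.
have x0 := tnth (in_tuple s) (cast_ord (size_map f s) i).
by rewrite (tnth_nth (f x0)) (tnth_nth x0) /= (nth_map x0) // -(size_map f).
Qed.

Section DiagonalMatching.
Variables (R : realType) (X : Type) (d : X -> X -> \bar R) (A : set X).
Variables (J : eqType) (a b : J -> X) (Ia Ib : seq J).
Hypotheses (Ia_uniq : uniq Ia) (Ib_uniq : uniq Ib).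
Hypothesis a_A : forall j, j \in Ib -> j \notin Ia -> A (a j).
Hypothesis b_A : forall j, j \in Ia -> j \notin Ib -> A (b j).

Let ia (k : 'I_(size (map a Ia))) := tnth (in_tuple Ia) (cast_ord (size_map a Ia) k).
Let ib (m : 'I_(size (map b Ib))) := tnth (in_tuple Ib) (cast_ord (size_map b Ib) m).

Let ia_inj : injective ia.
Proof.
have /(tuple_uniqP (in_tuple Ia)) Ia_inj := Ia_uniq.
by move=> k k' /Ia_inj/cast_ord_inj.
Qed.

Let ib_inj : injective ib.
Proof.
have /(tuple_uniqP (in_tuple Ib)) Ib_inj := Ib_uniq.
by move=> m m' /Ib_inj/cast_ord_inj.
Qed.

Let ia_onto j : j \in Ia -> exists k, ia k = j.
Proof.
case/(tnthP (in_tuple Ia)) => i ->.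
by exists (cast_ord (esym (size_map a Ia)) i); rewrite /ia cast_ordKV.
Qed.

Let ib_onto j : j \in Ib -> exists m, ib m = j.
Proof.
case/(tnthP (in_tuple Ib)) => i ->.
by exists (cast_ord (esym (size_map b Ib)) i); rewrite /ib cast_ordKV.
Qed.

Lemma diagonal_matching : exists phi z w,
  @is_matching X A (map a Ia) (map b Ib) phi z w /\
  forall e, e \in matching_costs d phi z w -> exists j, e = d (a j) (b j).
Proof.
pose phi k := [pick m | ib m == ia k].
have phiP k m : phi k = Some m -> ib m = ia k.
  by rewrite /phi; case: pickP => // m' /eqP <- [<-].
have phi_inIb k : ia k \in Ib -> exists m, phi k = Some m.
  move=> /ib_onto [m ibm]; rewrite /phi; case: pickP => [m' _|/(_ m)]; first by exists m'.
  by rewrite ibm eqxx.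
exists phi, (b \o ia), (a \o ib); split; first split.
- by move=> k k' m /phiP km /phiP k'm; apply: ia_inj; rewrite -km -k'm.
- move=> k phik; apply: b_A; first exact: mem_tnth.
  by apply/negP => /phi_inIb [m]; rewrite phik.
- move=> m phi_m; apply: a_A; first exact: mem_tnth.
  apply/negP => /ia_onto [k iak].
  have [m' phik] : exists m', phi k = Some m' by apply: phi_inIb; rewrite iak mem_tnth.
  apply: (phi_m k); rewrite phik; congr Some; apply: ib_inj.
  by rewrite (phiP _ _ phik) iak.
- move=> e; rewrite mem_cat => /orP[/mapP[k _ ->]|/mapP[m _ ->]].
  + exists (ia k); rewrite tnth_in_tuple_map.
    by case E: (phi k) => [m|] //=; rewrite tnth_in_tuple_map -/(ib m) (phiP _ _ E).
  + by exists (ib m); rewrite tnth_in_tuple_map.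
Qed.

End DiagonalMatching.

Section FilterTuples.
Variables (R : realType) (X : Type) (d : X -> X -> \bar R) (A : set X) (p : \bar R).
Hypothesis d_metric : is_metric d.

Lemma size_matching_costs xs ys phi z w :
  (size (@matching_costs R X d xs ys phi z w) <= size xs + size ys)%N.
Proof.
rewrite size_cat !size_map -enumT size_enum_ord leq_add2l size_filter.
by rewrite (leq_trans (count_size _ _)) // size_enum_ord.
Qed.

Lemma filter_tuple_tnth k (s : k.-tuple X) :
  [seq x <- s | x \notin A] = map (tnth s) [seq i <- enum 'I_k | tnth s i \notin A].
Proof. by rewrite -{1}(map_tnth_enum s) filter_map. Qed.

Lemma Wp_filter_tuple_le k (s t : k.-tuple X) : exists2 l : seq (\bar R),
    (Wp d A p [seq x <- s | x \notin A] [seq y <- t | y \notin A] <= lp_norm p l)%E &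
    (size l <= k + k)%N /\ forall e, e \in l -> (0 <= e <= tuple_dist d s t)%E.
Proof.
have [d_ge0 _ _ _] := d_metric.
have in_A (u v : k.-tuple X) i : i \in [seq i <- enum 'I_k | tnth v i \notin A] ->
    i \notin [seq i <- enum 'I_k | tnth u i \notin A] -> A (tnth u i).
  by rewrite mem_filter mem_enum mem_filter mem_enum !andbT negbK in_setE.
have [phi [z [w [phiM costs]]]] := @diagonal_matching R X d A 'I_k (tnth s) (tnth t)
  _ _ (filter_uniq _ (enum_uniq _)) (filter_uniq _ (enum_uniq _)) (in_A s t) (in_A t s).
exists (matching_costs d phi z w).
  by rewrite !filter_tuple_tnth; apply: ereal_inf_lbound; exists phi, z, w.
split=> [|e /costs [i ->]]; last by rewrite d_ge0 tuple_dist_tnth.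
apply: leq_trans (size_matching_costs _ _ _) _.
by rewrite leq_add // size_map size_filter (leq_trans (count_size _ _)) ?size_enum_ord.
Qed.

Hypothesis p_ge1 : (1%:E <= p)%E.

Lemma continuous_filter_tuple k :
  continuous_wrt (@tuple_dist R X d k) (Wp d A p)
    (fun s : k.-tuple X => [seq x <- s | x \notin A]).
Proof.
move=> s eps eps_gt0; have [del del_gt0 small] := lp_norm_small (k + k) p_ge1 eps_gt0.
exists del => // t st; have [l Wl [lk el]] := Wp_filter_tuple_le s t.
apply: le_lt_trans Wl (small l lk _) => e /el /andP[e_ge0 e_le].
by rewrite e_ge0 (le_lt_trans e_le st).
Qed.

End FilterTuples.

Lemma Dn_bigcup_filter_tuple (X : Type) (A : set X) (n : nat) :
  Dn A n = \bigcup_(k : 'I_n.+1) range (fun s : k.-tuple X => [seq x <- s | x \notin A]).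
Proof.
apply/seteqP; split=> [s [sn sA]|_ [k _ [s _ <-]]].
  exists (Ordinal (sn : size s < n.+1)%N) => //; exists (in_tuple s) => //=.
  have sA' : all (fun x => x \notin A) (in_tuple s).
    by apply/all_tnthP => i; apply/negP => /set_mem; apply: sA.
  exact/all_filterP.
split; first by rewrite size_filter (leq_trans (count_size _ _)) // size_tuple -ltnS.
have /all_tnthP sA : all (fun x => x \notin A) (in_tuple [seq x <- s | x \notin A]).
  exact: filter_all.
by move=> i; rewrite -notin_setE.
Qed.

Unset Implicit Arguments.

Theorem proposition7p8 (R : realType) (X : Type) (d : X -> X -> \bar R)
    (A : set X) (p : \bar R) :
  is_metric d -> closed_set d A -> (1%:E <= p)%E ->
  compact_in d setT ->
  forall n : nat, compact_in (Wp d A p) (Dn A n).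
Proof.
move=> d_metric _ p_ge1 Xc n.
rewrite Dn_bigcup_filter_tuple; apply: compact_in_bigcup => k.
apply: compact_in_image (compact_in_tuples d_metric Xc) _.
exact: continuous_filter_tuple.
Qed.
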